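(* Let $q$ be a prime power with $q\equiv 3\pmod 8$, and let $f(x)=x^2\left(x^{(q-1)/2}+3\right)$ or $f(x)=x^2\left(x^{(q-1)/2}-3\right)$ in $\mathbb{F}_q[x]$. Then $f$ is a permutation polynomial of $\mathbb{F}_q$ and $\delta_f\le 4$.
   Context: A polynomial $f\in\mathbb{F}_q[x]$ is a permutation polynomial of $\mathbb{F}_q$ if $c\mapsto f(c)$ is a bijection of $\mathbb{F}_q$. For $a\in\mathbb{F}_q^*$, $\Delta_{f,a}(x)=f(x+a)-f(x)$, and the differential uniformity is $\delta_f=\max_{a\in\mathbb{F}_q^*,\,c\in\mathbb{F}_q}|\{x\in\mathbb{F}_q:\Delta_{f,a}(x)=c\}|$. *)

From mathcomp Require Import all_boot all_order all_algebra all_field.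
Set Implicit Arguments. Unset Strict Implicit. Unset Printing Implicit Defensive.
Import GRing.Theory.
Local Open Scope ring_scope.

Definition is_perm_poly (F : finFieldType) (f : {poly F}) : Prop :=
  bijective (fun c : F => f.[c]).

Definition Delta (F : finFieldType) (f : {poly F}) (a x : F) : F :=
  f.[x + a] - f.[x].

Definition diff_unif (F : finFieldType) (f : {poly F}) : nat :=
  \max_(a : F | a != 0) \max_(c : F) #|[set x : F | Delta f a x == c]|.

From mathcomp Require Import all_boot all_order all_algebra all_field.
From mathcomp Require Import ring zify.
Import GRing.Theory.
Local Open Scope ring_scope.
Set Implicit Arguments. Unset Strict Implicit. Unset Printing Implicit Defensive.

(* Write h = (q - 1) / 2, so that x ^+ h is the quadratic character of x; since
   q = 3 mod 8, both -1 and 2 are non-squares.  The map x ^+ 2 * (x ^+ h + 3) is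
   4 x^2, 2 x^2 or 0 according as x is a nonzero square, a non-square or 0, so it
   preserves the quadratic character, which makes it injective.  For the
   differential uniformity, sort the solutions y of f (y + 1) - f y = c by the
   characters of y and y + 1: on each of the six possible classes the difference
   is a fixed quadratic in y, so a class holds at most one or two solutions, and
   subtracting the equations of two classes and taking characters shows that
   most pairs of classes cannot both be inhabited; a case count leaves at most
   four solutions.  A general shift a reduces to a = 1 by x |-> a x when a is a
   square and by a |-> -a otherwise, and the sign -3 reduces to +3 by x |-> -x. *)

Definition diff_fiber (V : finZmodType) (f : V -> V) (a c : V) : {set V} :=
  [set x | f (x + a) - f x == c].
Arguments diff_fiber [V] f (a c)%_R.

Lemma card_diff_fiber_opp (V : finZmodType) (f : V -> V) (a c : V) :
  #|diff_fiber f (- a) (- c)| = #|diff_fiber f a c|.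
Proof.
rewrite -[RHS](card_preimset _ (addIr (- a))); apply: eq_card => x.
by rewrite !inE subrK -eqr_opp opprB opprK.
Qed.

Lemma card_diff_fiber_scale (F : finFieldType) (f : F -> F) (b k a c : F) :
    b != 0 -> k != 0 -> (forall x, f (b * x) = k * f x) ->
  #|diff_fiber f (b * a) (k * c)| = #|diff_fiber f a c|.
Proof.
move=> b0 k0 fM; rewrite -[LHS](card_preimset _ (mulfI b0)); apply: eq_card => x.
by rewrite !inE -mulrDr !fM -mulrBr (inj_eq (mulfI k0)).
Qed.

Lemma card_diff_fiber_reflect (V : finZmodType) (f : V -> V) (a c : V) :
  #|diff_fiber (fun x => - f (- x)) a c| = #|diff_fiber f a c|.
Proof.
have inj_reflect : injective (fun x : V => - x - a) by move=> x y /addIr/oppr_inj.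
rewrite -[RHS](card_preimset _ inj_reflect); apply: eq_card => x.
by rewrite !inE subrK opprD opprK addrC.
Qed.

Lemma card_gt0_excl (T : finType) (A B : {set T}) :
  (forall x y, x \in A -> y \in B -> False) -> (0 < #|A|)%N -> #|B| = 0%N.
Proof.
by move=> AB /card_gt0P[x Ax]; apply: eq_card0 => y; apply/negbTE/negP => /(AB x y Ax).
Qed.

Lemma card_gt0_le1 (T : finType) (A B : {set T}) :
    (forall x y1 y2, x \in A -> y1 \in B -> y2 \in B -> y1 = y2) ->
  (0 < #|A|)%N -> (#|B| <= 1)%N.
Proof. by move=> AB /card_gt0P[x Ax]; apply/card_le1_eqP => y1 y2 B1 B2; apply: (AB x). Qed.

Lemma half_card_sign (F : finFieldType) (x : F) : odd #|F| -> x != 0 ->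
  x ^+ ((#|F| - 1) %/ 2) = 1 \/ x ^+ ((#|F| - 1) %/ 2) = -1.
Proof.
move=> oddF x0; have F_gt0 : (0 < #|F|)%N := ltnW (finNzRing_gt1 F).
have: (x ^+ ((#|F| - 1) %/ 2)) ^+ 2 == 1.
  rewrite -exprM divnK; last by rewrite dvdn2 oddB ?oddF.
  apply/eqP/(mulIf x0); rewrite mul1r -exprSr subn1 prednK //.
  exact: expf_card.
by rewrite sqrf_eq1 => /orP [] /eqP; [left | right].
Qed.

Section TwoIsNonSquare.

Variable F : finFieldType.
Hypothesis card_F_mod8 : (#|F| %% 8 = 3)%N.

Let k := (#|F| %/ 8)%N.

Let card_F : #|F| = (8 * k + 3)%N.
Proof. by rewrite {1}(divn_eq #|F| 8) card_F_mod8 mulnC. Qed.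

Let half_card : ((#|F| - 1) %/ 2 = 4 * k + 1)%N.
Proof. by rewrite card_F (_ : (8 * k + 3 - 1 = (4 * k + 1) * 2)%N) ?mulnK //; lia. Qed.

Lemma odd_half_card : odd ((#|F| - 1) %/ 2).
Proof. by rewrite half_card oddD oddM. Qed.

(* Computation in F[X]/(X^2 + 1), where X^q = -X and (1 + X)^2 = 2X, so that
   (1 + X)^q = (1 + X) 2^h X = 2^h (X - 1) must equal 1 + X^q = 1 - X; and
   X^2 + 1 divides no nonzero multiple of X - 1. *)
Lemma two_exp_half_card : (2 : F) ^+ ((#|F| - 1) %/ 2) = -1.
Proof.
have oddh := odd_half_card; rewrite half_card in oddh *.
set h := (4 * k + 1)%N; set X : {poly F} := 'X; set m := X ^+ 2 + 1.
have m_sqrX j : m %| (X ^+ 2) ^+ j - (-1) ^+ j by rewrite subrXX opprK dvdp_mulr.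
have expr_card (Z : {poly F}) : Z ^+ #|F| = Z * (Z ^+ 2) ^+ h.
  by rewrite -exprM -exprS card_F /h; congr (_ ^+ _); lia.
have Xh : X ^+ h = X * (X ^+ 2) ^+ (2 * k).
  by rewrite -exprM -exprS /h; congr (_ ^+ _); lia.
have frobenius : (1 + X) ^+ #|F| = 1 + X ^+ #|F|.
  have [p p_pr pcharFp] := finPcharP F.
  rewrite exprDn_pchar ?expr1n // (card_pprimeChar pcharFp).
  by rewrite (eq_pnat _ (pchar_poly F)) (eq_pnat _ (pcharf_eq pcharFp)) pnatX pnat_id.
have m_frob : m %| (1 + X) ^+ #|F| - (1 - X).
  have -> : (1 + X) ^+ #|F| - (1 - X) = X * ((X ^+ 2) ^+ h - (-1) ^+ h).
    by rewrite frobenius expr_card -signr_odd oddh expr1; ring.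
  exact/dvdp_mull/m_sqrX.
have m_sqr1X : m %| ((1 + X) ^+ 2) ^+ h - (2 * X) ^+ h.
  by rewrite subrXX (_ : (1 + X) ^+ 2 - 2 * X = m); [exact: dvdp_mulr | rewrite /m; ring].
have m_2X : m %| (2 * X) ^+ h - 2 ^+ h * X.
  have -> : (2 * X) ^+ h - 2 ^+ h * X = 2 ^+ h * X * ((X ^+ 2) ^+ (2 * k) - (-1) ^+ (2 * k)).
    by rewrite exprMn Xh [(-1) ^+ _]exprM sqrrN !expr1n; ring.
  exact/dvdp_mull/m_sqrX.
have : m %| (1 + 2 ^+ h)%:P * (X - 1).
  have -> : (1 + 2 ^+ h)%:P * (X - 1) = ((1 + X) ^+ #|F| - (1 - X))
      - (1 + X) * ((((1 + X) ^+ 2) ^+ h - (2 * X) ^+ h) + ((2 * X) ^+ h - 2 ^+ h * X))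
      - 2 ^+ h * m.
    by rewrite rmorphD rmorph1 rmorphXn rmorph_nat /m expr_card; ring.
  exact: dvdp_sub (dvdp_sub m_frob (dvdp_mull _ (dvdp_add m_sqr1X m_2X))) (dvdp_mull _ (dvdpp m)).
apply: contraTeq; rewrite -addr_eq0 addrC => nz.
have size_lin : size ((1 + 2 ^+ h)%:P * (X - 1)) = 2%N.
  by rewrite size_Cmul // -polyC1 size_XsubC.
have lin_neq0 : (1 + 2 ^+ h)%:P * (X - 1) != 0 by rewrite -size_poly_eq0 size_lin.
by apply/negP => /(dvdp_leq lin_neq0); rewrite size_lin /m -polyC1 size_XnaddC.
Qed.

End TwoIsNonSquare.

Section QuadraticCharacterMap.

Variables (F : finFieldType) (h : nat).
Hypothesis h_odd : odd h.
Hypothesis exprh_sign : forall x : F, x != 0 -> x ^+ h = 1 \/ x ^+ h = -1.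
Hypothesis two_exprh : (2 : F) ^+ h = -1.

Lemma exprh_eq0 (x : F) : (x ^+ h == 0) = (x == 0).
Proof. by rewrite expf_eq0 lt0n; case: (h) h_odd. Qed.

Lemma expr0h : (0 : F) ^+ h = 0.
Proof. by apply/eqP; rewrite exprh_eq0. Qed.

Lemma exprNh (x : F) : (- x) ^+ h = - x ^+ h.
Proof. by rewrite exprNn -signr_odd h_odd mulN1r. Qed.

Lemma exprh_mul2 (x : F) : (2 * x) ^+ h = - x ^+ h.
Proof. by rewrite exprMn two_exprh mulN1r. Qed.

Lemma two_neq0 : (2 : F) != 0.
Proof. by rewrite -exprh_eq0 two_exprh oppr_eq0 oner_eq0. Qed.

Lemma oner_neqN1 : (1 : F) != -1.
Proof. by rewrite -subr_eq0 opprK (_ : 1 + 1 = 2) ?two_neq0. Qed.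

Lemma add3_neq0 (e : F) : e = 1 \/ e = -1 -> e + 3 != 0.
Proof.
case=> ->; first by rewrite (_ : 1 + 3 = 2 * 2) ?mulf_neq0 ?two_neq0 //; ring.
by rewrite (_ : -1 + 3 = 2) ?two_neq0 //; ring.
Qed.

Lemma sqr_exprh_neqN1 (x : F) : (x ^+ 2) ^+ h != -1.
Proof.
rewrite -exprM mulnC exprM; have [->|/exprh_sign[]->] := eqVneq x 0.
- by rewrite expr0h expr2 mul0r eq_sym oppr_eq0 oner_eq0.
- by rewrite expr1n oner_neqN1.
- by rewrite sqrrN expr1n oner_neqN1.
Qed.

Definition f_eps (e x : F) := x ^+ 2 * (x ^+ h + e).
Arguments f_eps (e x)%_R.

Lemma f_epsN3 (x : F) : f_eps (-3) x = - f_eps 3 (- x).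
Proof. by rewrite /f_eps exprNh sqrrN; ring. Qed.

Lemma exprh_f_eps3 (x : F) : (f_eps 3 x) ^+ h = x ^+ h.
Proof.
rewrite /f_eps; have [->|/exprh_sign [ex|ex]] := eqVneq x 0.
- by rewrite expr2 !mul0r.
- rewrite ex (_ : x ^+ 2 * (1 + 3) = 2 * (2 * x ^+ 2)); last by ring.
  by rewrite !exprh_mul2 opprK -exprM mulnC exprM ex expr1n.
- rewrite ex (_ : x ^+ 2 * (-1 + 3) = 2 * x ^+ 2); last by ring.
  by rewrite exprh_mul2 -exprM mulnC exprM ex sqrrN expr1n.
Qed.

Lemma f_eps3_inj : injective (f_eps 3).
Proof.
move=> x y fxy; have exy : x ^+ h = y ^+ h by rewrite -exprh_f_eps3 fxy exprh_f_eps3.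
have [x0|x0] := eqVneq x 0.
  by move/eqP: exy; rewrite x0 expr0h eq_sym exprh_eq0 => /eqP ->.
have ex3 := add3_neq0 (exprh_sign x0).
move: fxy; rewrite /f_eps -exy => /(mulIf ex3)/eqP; rewrite eqf_sqr => /orP[/eqP //|/eqP yx].
move/eqP: exy; rewrite yx exprNh eq_sym -addr_eq0 -mulr2n -mulr_natl mulf_eq0.
by rewrite (negbTE two_neq0) exprh_eq0 -oppr_eq0 -yx (negbTE x0).
Qed.

Lemma mul2f_eq0 (t : F) : (2 * t == 0) = (t == 0).
Proof. by rewrite mulf_eq0 (negbTE two_neq0). Qed.

(* [f_eps 3 (y + 1) - f_eps 3 y] is [diff_branch (y ^+ h) ((y + 1) ^+ h) y] by
   definition. *)
Definition diff_branch (e e' y : F) := (y + 1) ^+ 2 * (e' + 3) - y ^+ 2 * (e + 3).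

Lemma diff_branch_sum (e e' c y1 y2 : F) :
    diff_branch e e' y1 = c -> diff_branch e e' y2 = c -> y1 != y2 ->
  (e' - e) * (y1 + y2) + 2 * (e' + 3) = 0.
Proof.
move=> E1 E2 y12.
have : (y1 - y2) * ((e' - e) * (y1 + y2) + 2 * (e' + 3)) = c - c.
  by rewrite -{1}E1 -E2 /diff_branch; ring.
by rewrite subrr => /eqP; rewrite mulf_eq0 subr_eq0 (negbTE y12) => /eqP.
Qed.

Section FiberAtOne.

Variable c : F.

Definition diff_class (i j : F) :=
  [set y in diff_fiber (f_eps 3) 1 c | (y ^+ h == i) && ((y + 1) ^+ h == j)].
Arguments diff_class (i j)%_R.

Lemma diff_classP i j y :
  y \in diff_class i j -> [/\ y ^+ h = i, (y + 1) ^+ h = j & diff_branch i j y = c].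
Proof. by rewrite !inE => /and3P[/eqP Ey /eqP <- /eqP <-]. Qed.

Lemma diff_class_0l j y : y \in diff_class 0 j -> y = 0.
Proof. by case/diff_classP => /eqP; rewrite exprh_eq0 => /eqP. Qed.

Lemma diff_class_0r i y : y \in diff_class i 0 -> y = -1.
Proof. by case/diff_classP => _ /eqP; rewrite exprh_eq0 addr_eq0 => /eqP. Qed.

Lemma card_diff_class_diag i : i + 3 != 0 -> (#|diff_class i i| <= 1)%N.
Proof.
move=> i3; apply/card_le1_eqP => y1 y2 /diff_classP[_ _ E1] /diff_classP[_ _ E2].
have [//|y12] := eqVneq y1 y2; move/eqP: (diff_branch_sum E1 E2 y12).
by rewrite subrr mul0r add0r mul2f_eq0 (negbTE i3).
Qed.

Lemma card_diff_class_offdiag i j : i != j -> (#|diff_class i j| <= 2)%N.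
Proof.
move=> ij; have [->|[y0 /diff_classP[_ _ E0]]] := set_0Vmem (diff_class i j).
  by rewrite cards0.
have ji : j - i != 0 by rewrite subr_eq0 eq_sym.
pose s := (j - i)^-1 * - (2 * (j + 3)).
apply: (@leq_trans #|[set y0; s - y0]|); last by rewrite cards2; case: (_ != _).
apply/subset_leq_card/subsetP => y /diff_classP[_ _ E]; apply/set2P.
have [-> | y0y] := eqVneq y0 y; [by left | right].
have /eqP := diff_branch_sum E0 E y0y; rewrite addr_eq0 => /eqP S.
by rewrite /s -S mulKf // addrC addKr.
Qed.

Lemma card_diff_class_0l j : (#|diff_class 0 j| <= 1)%N.
Proof.
by apply/card_le1_eqP => y1 y2 /diff_class_0l -> /diff_class_0l ->.
Qed.

Lemma card_diff_class_0r i : (#|diff_class i 0| <= 1)%N.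
Proof.
by apply/card_le1_eqP => y1 y2 /diff_class_0r -> /diff_class_0r ->.
Qed.

(* In the names below the class [diff_class i j] is spelled [ij], with [N] for -1;
   [diff_class 0 1] and [diff_class (-1) 0] are the classes of y = 0 and y = -1. *)
Lemma diff_class11_1N x y : x \in diff_class 1 1 -> y \in diff_class 1 (-1) -> False.
Proof.
case/diff_classP=> ex _ Ex /diff_classP[_ _ Ey].
have : 2 * ((y - 1) ^+ 2 + 2 * (2 * x)) = c - c.
  by rewrite -{1}Ex -Ey /diff_branch; ring.
rewrite subrr => /eqP; rewrite mul2f_eq0 addr_eq0 => /eqP sqr_y1.
by have := sqr_exprh_neqN1 (y - 1); rewrite sqr_y1 exprNh !exprh_mul2 opprK ex eqxx.
Qed.

Lemma diff_class11_N1 x y1 y2 :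
  x \in diff_class 1 1 -> y1 \in diff_class (-1) 1 -> y2 \in diff_class (-1) 1 -> y1 = y2.
Proof.
case/diff_classP=> ex _ Ex /diff_classP[e1 _ E1] /diff_classP[e2 _ E2].
have [//|y12] := eqVneq y1 y2; have S := diff_branch_sum E1 E2 y12.
have : 2 * (y1 * y2 + 2 * (2 * x)) =
    y1 * ((1 - -1) * (y1 + y2) + 2 * (1 + 3)) - (diff_branch (-1) 1 y1 - diff_branch 1 1 x).
  by rewrite /diff_branch; ring.
rewrite S E1 Ex subrr mulr0 subr0 => /eqP; rewrite mul2f_eq0 addr_eq0 => /eqP y1y2.
have /eqP := congr1 (fun t => t ^+ h) y1y2.
by rewrite /= exprMn e1 e2 mulrNN mulr1 exprNh !exprh_mul2 opprK ex (negbTE oner_neqN1).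
Qed.

Lemma diff_class11_01 x y : x \in diff_class 1 1 -> y \in diff_class 0 1 -> False.
Proof.
move=> /diff_classP[ex _ Ex] /[dup] /diff_class_0l y0 /diff_classP[_ _ Ey].
have : 2 * (2 * (2 * x)) = c - c by rewrite -{1}Ex -Ey y0 /diff_branch; ring.
rewrite subrr => /eqP; rewrite !mul2f_eq0 => /eqP x0.
by move/eqP: ex; rewrite x0 expr0h eq_sym oner_eq0.
Qed.

Lemma diff_classN0_NN y0 y : y0 \in diff_class (-1) 0 -> y \in diff_class (-1) (-1) -> False.
Proof.
move=> /[dup] /diff_class_0r y0E /diff_classP[_ _ E0] /diff_classP[_ ey Ey].
have : 2 * (2 * (y + 1)) = c - c by rewrite -{1}Ey -E0 y0E /diff_branch; ring.
rewrite subrr => /eqP; rewrite !mul2f_eq0 => /eqP y1.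
by move/eqP: ey; rewrite y1 expr0h eq_sym oppr_eq0 oner_eq0.
Qed.

Lemma diff_classN0_N1 y0 y1 y2 :
  y0 \in diff_class (-1) 0 -> y1 \in diff_class (-1) 1 -> y2 \in diff_class (-1) 1 -> y1 = y2.
Proof.
move=> /[dup] /diff_class_0r y0E /diff_classP[_ _ E0].
suff root y : y \in diff_class (-1) 1 -> y = -3 by move=> /root -> /root ->.
case/diff_classP=> _ ey Ey.
have : 2 * ((y + 1) * (y + 3)) = c - c by rewrite -{1}Ey -E0 y0E /diff_branch; ring.
rewrite subrr => /eqP; rewrite mul2f_eq0 mulf_eq0 -exprh_eq0 ey oner_eq0 addr_eq0.
by move/eqP.
Qed.

Lemma diff_classNN_N1 y0 y1 y2 :
  y0 \in diff_class (-1) (-1) -> y1 \in diff_class (-1) 1 -> y2 \in diff_class (-1) 1 ->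
  y1 = y2.
Proof.
case/diff_classP=> _ e0 E0 /diff_classP[_ e1 E1] /diff_classP[_ e2 E2].
have [//|y12] := eqVneq y1 y2; have S := diff_branch_sum E1 E2 y12.
have : 2 * ((y1 + 1) * (y2 + 1) + 2 * (y0 + 1)) = (y1 + 1) * ((1 - -1) * (y1 + y2) + 2 * (1 + 3))
    - (diff_branch (-1) 1 y1 - diff_branch (-1) (-1) y0).
  by rewrite /diff_branch; ring.
rewrite S E1 E0 subrr mulr0 subr0 => /eqP; rewrite mul2f_eq0 addr_eq0 => /eqP y1y2.
have /eqP := congr1 (fun t => t ^+ h) y1y2.
by rewrite /= exprMn e1 e2 mulr1 exprNh exprh_mul2 opprK e0 (negbTE oner_neqN1).
Qed.

Lemma diff_class01_1N x y1 y2 :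
  x \in diff_class 0 1 -> y1 \in diff_class 1 (-1) -> y2 \in diff_class 1 (-1) -> y1 = y2.
Proof.
move=> /[dup] /diff_class_0l x0 /diff_classP[_ _ Ex].
suff root y : y \in diff_class 1 (-1) -> y = 1 by move=> /root -> /root ->.
case/diff_classP=> _ _ Ey.
have : 2 * (y - 1) ^+ 2 = c - c by rewrite -{1}Ex -Ey x0 /diff_branch; ring.
by rewrite subrr => /eqP; rewrite mul2f_eq0 expf_eq0 subr_eq0 => /eqP.
Qed.

Lemma diff_class01_N1 x y1 y2 :
  x \in diff_class 0 1 -> y1 \in diff_class (-1) 1 -> y2 \in diff_class (-1) 1 -> y1 = y2.
Proof.
move=> /[dup] /diff_class_0l x0 /diff_classP[_ _ Ex].
suff root y : y \in diff_class (-1) 1 -> y = -4 by move=> /root -> /root ->.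
case/diff_classP=> ey _ Ey.
have : 2 * (y * (y + 4)) = c - c by rewrite -{1}Ey -Ex x0 /diff_branch; ring.
rewrite subrr => /eqP; rewrite mul2f_eq0 mulf_eq0 -exprh_eq0 ey oppr_eq0 oner_eq0 addr_eq0.
by move/eqP.
Qed.

Lemma diff_fiber_sub_classes :
  diff_fiber (f_eps 3) 1 c \subset diff_class 1 1 :|: diff_class 1 (-1) :|: diff_class (-1) 1
    :|: diff_class (-1) (-1) :|: diff_class 0 1 :|: diff_class (-1) 0.
Proof.
apply/subsetP => y; rewrite !inE => -> /=.
have [->|y0] := eqVneq y 0; first by rewrite add0r expr0h expr1n !eqxx !orbT.
have [->|yN1] := eqVneq y (-1); first by rewrite addNr expr0h exprNh expr1n !eqxx !orbT.
have y1 : y + 1 != 0 by rewrite addr_eq0.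
by case: (exprh_sign y0) => ->; case: (exprh_sign y1) => ->; rewrite !eqxx ?orbT.
Qed.

Lemma card_diff_fiber1_le4 : (#|diff_fiber (f_eps 3) 1 c| <= 4)%N.
Proof.
have cover : (#|diff_fiber (f_eps 3) 1 c| <= #|diff_class 1 1| + #|diff_class 1 (-1)|
    + #|diff_class (-1) 1| + #|diff_class (-1) (-1)| + #|diff_class 0 1| + #|diff_class (-1) 0|)%N.
  apply: leq_trans (subset_leq_card diff_fiber_sub_classes) _.
  by do 5 (apply: leq_trans (leq_card_setU _ _).1 _; rewrite leq_add2r).
have N1_neq1 : (-1 : F) != 1 by rewrite eq_sym oner_neqN1.
have := card_diff_class_diag (add3_neq0 (or_introl erefl)).
have := card_diff_class_diag (add3_neq0 (or_intror erefl)).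
have := card_diff_class_offdiag oner_neqN1; have := card_diff_class_offdiag N1_neq1.
have := card_diff_class_0l 1; have := card_diff_class_0r (-1).
have := card_gt0_excl diff_class11_1N; have := card_gt0_le1 diff_class11_N1.
have := card_gt0_excl diff_class11_01; have := card_gt0_excl diff_classN0_NN.
have := card_gt0_le1 diff_classN0_N1; have := card_gt0_le1 diff_classNN_N1.
have := card_gt0_le1 diff_class01_1N; have := card_gt0_le1 diff_class01_N1.
lia.
Qed.

End FiberAtOne.

Lemma f_eps3_scale b x : b ^+ h = 1 -> f_eps 3 (b * x) = b ^+ 2 * f_eps 3 x.
Proof. by move=> eb; rewrite /f_eps !exprMn eb mul1r; ring. Qed.

Lemma card_diff_fiber_f_eps3 a c : a != 0 -> (#|diff_fiber (f_eps 3) a c| <= 4)%N.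
Proof.
move=> a0; wlog ea : a c a0 / a ^+ h = 1.
  move=> le4; case: (exprh_sign a0) => ea; first exact: le4.
  by rewrite -card_diff_fiber_opp le4 ?oppr_eq0 // exprNh ea opprK.
have a2 : a ^+ 2 != 0 by rewrite expf_neq0.
rewrite -[a]mulr1 -[c](mulVKf a2) card_diff_fiber_scale //; first exact: card_diff_fiber1_le4.
by move=> x; apply: f_eps3_scale.
Qed.

Lemma f_eps_inj e : e = 3 \/ e = -3 -> injective (f_eps e).
Proof.
case=> ->; first exact: f_eps3_inj.
by move=> x y; rewrite !f_epsN3 => /oppr_inj/f_eps3_inj/oppr_inj.
Qed.

Lemma card_diff_fiber_f_eps e a c :
  e = 3 \/ e = -3 -> a != 0 -> (#|diff_fiber (f_eps e) a c| <= 4)%N.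
Proof.
case=> -> a0; first exact: card_diff_fiber_f_eps3.
rewrite (eq_card (B := diff_fiber (fun x => - f_eps 3 (- x)) a c)) => [|x].
  by rewrite card_diff_fiber_reflect card_diff_fiber_f_eps3.
by rewrite !inE !f_epsN3.
Qed.

End QuadraticCharacterMap.

Unset Implicit Arguments.

Theorem corollary1p3 (F : finFieldType) (q : nat) (eps : F)
    (hq : #|F| = q) (hq8 : (q %% 8 = 3)%N) (heps : eps = 3 \/ eps = -3) :
  let f : {poly F} := 'X^2 * ('X^((q - 1) %/ 2) + eps%:P) in
  is_perm_poly f /\ (diff_unif f <= 4)%N.
Proof.
move=> f; subst q.
have oddF : odd #|F| by rewrite (divn_eq #|F| 8) hq8 oddD oddM andbF.
have h_odd := odd_half_card hq8.
have two_h := two_exp_half_card hq8.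
have sign x := @half_card_sign F x oddF.
have fE x : f.[x] = f_eps ((#|F| - 1) %/ 2) eps x by rewrite /f /f_eps !hornerE.
split.
  by apply: injF_bij => x y; rewrite !fE; apply: f_eps_inj.
apply/bigmax_leqP => a a0; apply/bigmax_leqP => c _.
rewrite (eq_card (B := diff_fiber (f_eps ((#|F| - 1) %/ 2) eps) a c)) => [|x].
  exact: card_diff_fiber_f_eps.
by rewrite !inE /Delta !fE.
Qed.
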